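(* Let $S$ be a UFD and let $F,F'$ be nonzero elements of $S\setminus U(S)$. For $C\in\{0\}\cup U(S)$ write $F-C=F_{C,0}F_{C,1}^{E(C,1)}\cdots F_{C,Q(C)}^{E(C,Q(C))}$ with $F_{C,0}\in U(S)$, integers $1\le E(C,1)\le\dots\le E(C,Q(C))$, and pairwise coprime irreducible $F_{C,1},\dots,F_{C,Q(C)}\in S\setminus U(S)$; let $F'-C=F'_{C,0}F'^{E'(C,1)}_{C,1}\cdots F'^{E'(C,Q'(C))}_{C,Q'(C)}$ be the corresponding factorization of $F'-C$. Assume there is a ring isomorphism $\Delta:S[1/F]\to S[1/F']$ with $\Delta(U(S))=U(S)$. Then (i) $Q(0)=Q'(0)$; and (ii) if $F$ and $F'$ are irreducible in $S$, there exists a bijection $\Theta:U(S)\to U(S)$ such that for all $C\in U(S)$ we have $Q(C)=Q'(\Theta(C))$ and $E(C,i)=E'(\Theta(C),i)$ for $1\le i\le Q(C)$.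
   Context: $U(S)$ denotes the group of units of $S$. *)

From HB Require Import structures.
From mathcomp Require Import all_boot all_order all_algebra.
From mathcomp Require Import fraction.
Set Implicit Arguments. Unset Strict Implicit. Unset Printing Implicit Defensive.
Import Order.TTheory GRing.Theory Num.Theory.
Local Open Scope ring_scope.

Section Defs.
Variable S : idomainType.

Definition unitS (x : S) : Prop := x \is a GRing.unit.

Definition dvdS (a b : S) : Prop := exists c : S, b = a * c.
Definition assocS (a b : S) : Prop := exists u : S, unitS u /\ b = u * a.
Definition irreducibleS (p : S) : Prop :=
  p != 0 /\ ~ unitS p /\ forall a b : S, p = a * b -> unitS a \/ unitS b.
Definition coprimeS (a b : S) : Prop :=
  forall d : S, dvdS d a -> dvdS d b -> unitS d.

Definition is_UFD : Prop :=
  (forall x : S, x != 0 -> ~ unitS x ->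
     exists ps : seq S, (forall p, p \in ps -> irreducibleS p) /\
                        x = \prod_(p <- ps) p) /\
  (forall ps qs : seq S,
     (forall p, p \in ps -> irreducibleS p) ->
     (forall q, q \in qs -> irreducibleS q) ->
     \prod_(p <- ps) p = \prod_(q <- qs) q ->
     exists qs' : seq S, perm_eq qs qs' /\ size ps = size qs' /\
       forall i, (i < size ps)%N -> assocS (nth 0 ps i) (nth 0 qs' i)).

(* [factorization x es] : x = u * p_1^(e_1) * ... * p_Q^(e_Q) with u a unit,
   p_i pairwise coprime irreducible nonunits, and 1 <= e_1 <= ... <= e_Q,
   where es = [:: e_1; ...; e_Q] (so Q = size es and E(i) = nth 0 es i.-1). *)
Definition factorization (x : S) (es : seq nat) : Prop :=
  exists (u : S) (ps : seq S),
    unitS u /\ size ps = size es /\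
    (forall i, (i < size ps)%N -> irreducibleS (nth 0 ps i)) /\
    (forall i j, (i < size ps)%N -> (j < size ps)%N -> i <> j ->
        coprimeS (nth 0 ps i) (nth 0 ps j)) /\
    (forall i, (i < size es)%N -> (1 <= nth 0%N es i)%N) /\
    sorted leq es /\
    x = u * \prod_(i < size ps) (nth 0 ps i) ^+ (nth 0%N es i).

(* The localization S[1/F], realized as a subring of the fraction field. *)
Definition fracS (x : S) : {fraction S} := @FracField.tofrac S x.
Definition in_loc (F : S) (z : {fraction S}) : Prop :=
  exists (a : S) (n : nat), z = fracS a / (fracS F) ^+ n.

(* Delta is a ring isomorphism S[1/F] -> S[1/F'] (only its restriction to
   S[1/F] matters) mapping the units of S onto the units of S. *)
Definition loc_ring_iso (F F' : S) (D : {fraction S} -> {fraction S}) : Prop :=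
  (forall z, in_loc F z -> in_loc F' (D z)) /\
  (forall z w, in_loc F z -> in_loc F w -> D (z + w) = D z + D w) /\
  (forall z w, in_loc F z -> in_loc F w -> D (z * w) = D z * D w) /\
  D 1 = 1 /\
  (forall z w, in_loc F z -> in_loc F w -> D z = D w -> z = w) /\
  (forall w, in_loc F' w -> exists z, in_loc F z /\ D z = w).

Definition preserves_units (D : {fraction S} -> {fraction S}) : Prop :=
  (forall u : S, unitS u -> exists v : S, unitS v /\ D (fracS u) = fracS v) /\
  (forall v : S, unitS v -> exists u : S, unitS u /\ D (fracS u) = fracS v).

End Defs.

(* Write Q(F) for the number of pairwise coprime prime factors of F.  The units of
   S[1/F] are U(S) times the free abelian group on these factors, so Q(F) is the
   dimension over F_2 of U(S[1/F]) / U(S) U(S[1/F])^2: the prime factors of F are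
   independent there (compare the parities of their valuations), while any Q(F) + 1
   units are dependent (pigeonhole on the parity vectors of their exponents).  The
   isomorphism D preserves these quotients, whence Q(F) = Q(F').
   When F and F' are irreducible the unit groups are U(S) x F^Z and U(S) x F'^Z, so
   D F = v F'^(+-1) with v a unit and D permutes U(S); hence D (F - C) is a unit of
   S[1/F'] times F' - Theta C for a bijection Theta of U(S).  For a unit C, F does not
   divide F - C, so the factorization of F - C in S is one in S[1/F]; D carries it to
   S[1/F'], where it is read back as a factorization of F' - Theta C in S with the same
   exponents, and factorizations in S are unique. *)

From HB Require Import structures.
From mathcomp Require Import all_boot all_order all_algebra.
From mathcomp Require Import fraction ring.
From Stdlib Require Import Classical ClassicalEpsilon.
Import Order.TTheory GRing.Theory Num.Theory.
Set Implicit Arguments. Unset Strict Implicit. Unset Printing Implicit Defensive.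
Local Open Scope ring_scope.

Section Divisibility.
Variable S : idomainType.
Implicit Types a b c d p q u : S.

Lemma dvdS_refl a : dvdS a a.
Proof. by exists 1; rewrite mulr1. Qed.

Lemma dvdS_trans a b c : dvdS a b -> dvdS b c -> dvdS a c.
Proof. by move=> [x ->] [y ->]; exists (x * y); rewrite mulrA. Qed.

Lemma dvdS_mulr a b c : dvdS a b -> dvdS a (b * c).
Proof. by move=> [x ->]; exists (x * c); rewrite mulrA. Qed.

Lemma dvdS_mull a b c : dvdS a c -> dvdS a (b * c).
Proof. by move=> [x ->]; exists (b * x); rewrite mulrCA. Qed.

Lemma dvdS_mulIr a b : dvdS a (a * b).
Proof. exact/dvdS_mulr/dvdS_refl. Qed.

Lemma dvdS0 a : dvdS a 0.
Proof. by exists 0; rewrite mulr0. Qed.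

Lemma dvdSB d a b : dvdS d a -> dvdS d b -> dvdS d (a - b).
Proof. by move=> [x ->] [y ->]; exists (x - y); rewrite mulrBr. Qed.

Lemma dvdS_exp a n : (0 < n)%N -> dvdS a (a ^+ n).
Proof. by case: n => // n _; exists (a ^+ n); rewrite exprS. Qed.

Lemma dvdS_exp2l a m n : (m <= n)%N -> dvdS (a ^+ m) (a ^+ n).
Proof. by move=> le_mn; exists (a ^+ (n - m)); rewrite -exprD subnKC. Qed.

Lemma dvdS_exp2r a b n : dvdS a b -> dvdS (a ^+ n) (b ^+ n).
Proof. by move=> [c ->]; exists (c ^+ n); rewrite exprMn. Qed.

Lemma dvdS_prod (I : eqType) (r : seq I) (f g : I -> S) :
  {in r, forall i, dvdS (f i) (g i)} ->
  dvdS (\prod_(i <- r) f i) (\prod_(i <- r) g i).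
Proof.
elim: r => [|i r IHr] fg; first by rewrite !big_nil; apply: dvdS_refl.
rewrite !big_cons; have [c ->] := fg i (mem_head i r).
have [e ->] := IHr (fun j rj => fg j (@mem_behead _ (i :: r) j rj)).
by exists (c * e); ring.
Qed.

Lemma dvdS_prod_mem (l : seq S) q : q \in l -> dvdS q (\prod_(p <- l) p).
Proof. by move=> lq; rewrite (big_rem q lq) /=; apply: dvdS_mulIr. Qed.

Lemma dvdS_bigD1 (I : finType) (f : I -> S) i : dvdS (f i) (\prod_j f j).
Proof. by rewrite (bigD1 i) //; apply: dvdS_mulIr. Qed.

Lemma unitS1 : unitS (1 : S).
Proof. exact: unitr1. Qed.

Lemma unitSM a b : unitS a -> unitS b -> unitS (a * b).
Proof. by rewrite /unitS unitrM => -> ->. Qed.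

Lemma unitSV a : unitS a -> unitS a^-1.
Proof. by rewrite /unitS unitrV. Qed.

Lemma unitSX a n : unitS a -> unitS (a ^+ n).
Proof. exact: unitrX. Qed.

Lemma unitS_prod (I : Type) (r : seq I) (P : pred I) (f : I -> S) :
  (forall i, P i -> unitS (f i)) -> unitS (\prod_(i <- r | P i) f i).
Proof. by move=> Uf; apply: big_ind => //; [apply: unitS1 | apply: unitSM]. Qed.

Lemma dvdS_unit a u : dvdS a u -> unitS u -> unitS a.
Proof. by move=> [x ->]; rewrite /unitS unitrM => /andP[]. Qed.

Lemma dvdS_unit_mull u a b : unitS u -> dvdS a (u * b) -> dvdS a b.
Proof. by move=> Uu [c def_ub]; exists (u^-1 * c); rewrite mulrCA -def_ub mulKr. Qed.

Lemma irrS_neq0 p : irreducibleS p -> p != 0.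
Proof. by case. Qed.

Lemma irrS_nunit p : irreducibleS p -> ~ unitS p.
Proof. by case=> _ []. Qed.

Lemma irrS_ndvd_unit p u : irreducibleS p -> unitS u -> ~ dvdS p u.
Proof. by move=> irr_p Uu /dvdS_unit/(_ Uu); apply: irrS_nunit. Qed.

Lemma irrS_ndvd_subr p u : irreducibleS p -> unitS u -> ~ dvdS p (p - u).
Proof.
move=> irr_p Uu dvd_p; apply: irrS_ndvd_unit irr_p Uu _.
have -> : u = p - (p - u) by rewrite opprB addrC subrK.
exact: dvdSB (dvdS_refl p) dvd_p.
Qed.

Lemma irrS_mulr_unit p u : irreducibleS p -> unitS u -> irreducibleS (p * u).
Proof.
move=> [p0 [Np irr_p]] Uu; split.
  by rewrite mulf_neq0 //; apply: contraTneq Uu => ->; rewrite /unitS unitr0.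
split; first by move/(dvdS_unit (dvdS_mulIr p u)).
move=> a b /(canRL (mulrK Uu)); rewrite -mulrA => /irr_p [Ua|Ub]; first by left.
by right; rewrite -[b](mulrVK Uu); apply: unitSM.
Qed.

Lemma irrS_dvd_sym p q : irreducibleS p -> irreducibleS q -> dvdS p q -> dvdS q p.
Proof.
move=> irr_p [_ [_ irr_q]] [c def_q]; have [Up|Uc] := irr_q _ _ def_q.
  by case: (irrS_nunit irr_p).
by exists c^-1; rewrite def_q mulrK.
Qed.

End Divisibility.
Arguments unitS1 {S}.

Section UniqueFactorizationDomain.
Variable S : idomainType.
Hypothesis hS : is_UFD S.
Implicit Types a b c p q u : S.

Lemma ufd_factor x : x != 0 -> exists u (l : seq S),
  [/\ unitS u, {in l, forall p, irreducibleS p} & x = u * \prod_(p <- l) p].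
Proof.
move=> x0; have [Ux|NUx] := boolP (x \is a GRing.unit).
  by exists x, [::]; rewrite big_nil mulr1.
have [l [irr_l ->]] := hS.1 x x0 (negP NUx).
by exists 1, l; rewrite mul1r; split=> //; apply: unitS1.
Qed.

Lemma irrS_dvd_prod_seq p (l : seq S) : irreducibleS p ->
  {in l, forall q, irreducibleS q} ->
  dvdS p (\prod_(q <- l) q) -> exists2 q, q \in l & dvdS p q.
Proof.
move=> irr_p irr_l [c def_l].
have l0 : \prod_(q <- l) q != 0.
  by rewrite prodf_seq_neq0; apply/allP => q /irr_l /irrS_neq0.
have c0 : c != 0 by apply: contraNneq l0 => c0; rewrite def_l c0 mulr0.
have [uc [lc [Uuc irr_lc def_c]]] := ufd_factor c0.
have irr_pl : {in p * uc :: lc, forall q, irreducibleS q}.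
  by move=> q /predU1P[-> | /irr_lc //]; apply: irrS_mulr_unit.
have : \prod_(q <- l) q = \prod_(q <- p * uc :: lc) q.
  by rewrite big_cons def_l def_c mulrA.
case/(hS.2 _ _ irr_l irr_pl) => l' [perm_l' [size_l' assoc_l']].
have /(nthP 0) [i lt_i def_i] : p * uc \in l' by rewrite -(perm_mem perm_l') mem_head.
have [|v [Uv def_l'i]] := assoc_l' i; first by rewrite size_l'.
exists (nth 0 l i); first by rewrite mem_nth ?size_l'.
exists (uc * v^-1); rewrite -[nth 0 l i](mulKr Uv) -def_l'i def_i; ring.
Qed.

Lemma irrS_prime p a b : irreducibleS p -> dvdS p (a * b) -> dvdS p a \/ dvdS p b.
Proof.
move=> irr_p dvd_pab.
have [->|a0] := eqVneq a 0; first by left; apply: dvdS0.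
have [->|b0] := eqVneq b 0; first by right; apply: dvdS0.
have [ua [la [Uua irr_la def_a]]] := ufd_factor a0.
have [ub [lb [Uub irr_lb def_b]]] := ufd_factor b0.
have irr_lab : {in la ++ lb, forall q, irreducibleS q}.
  by move=> q; rewrite mem_cat => /orP[/irr_la | /irr_lb].
have : dvdS p (\prod_(q <- la ++ lb) q).
  apply: (dvdS_unit_mull (unitSM Uua Uub)).
  by move: dvd_pab; rewrite def_a def_b big_cat /=; congr dvdS; ring.
case/(irrS_dvd_prod_seq irr_p irr_lab) => q; rewrite mem_cat.
case/orP => [la_q | lb_q] /dvdS_trans dvd_p; [left; rewrite def_a | right; rewrite def_b];
  by apply/dvd_p/dvdS_mull/dvdS_prod_mem.
Qed.

Lemma irrS_dvd_big p (I : Type) (r : seq I) (P : pred I) (f : I -> S) :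
  irreducibleS p -> dvdS p (\prod_(i <- r | P i) f i) -> exists i, P i /\ dvdS p (f i).
Proof.
move=> irr_p; elim: r => [|i r IHr].
  by rewrite big_nil => /irrS_ndvd_unit; case/(_ irr_p unitS1).
rewrite big_cons; case: ifP => Pi; last exact: IHr.
by case/(irrS_prime irr_p) => [dvd_pi|]; [exists i | exact: IHr].
Qed.

Lemma irrS_dvd_exp p a n : irreducibleS p -> dvdS p (a ^+ n) -> dvdS p a.
Proof.
move=> irr_p; elim: n => [|n IHn].
  by rewrite expr0 => /irrS_ndvd_unit; case/(_ irr_p unitS1).
by rewrite exprS => /(irrS_prime irr_p) [|/IHn].
Qed.

Lemma dvdS_mul_prime_pow p a b n : irreducibleS p -> dvdS a (b * p ^+ n) ->
  exists a1 k, a = a1 * p ^+ k /\ dvdS a1 b.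
Proof.
move=> irr_p; have p0 := irrS_neq0 irr_p.
elim: n a => [|n IHn] a; first by rewrite expr0 mulr1; exists a, 0%N; rewrite expr0 mulr1.
move=> [c def_bp].
have : dvdS p (a * c) by rewrite -def_bp exprS mulrCA; apply: dvdS_mulIr.
case/(irrS_prime irr_p) => [[a' def_a] | [c' def_c]].
  have /IHn [a1 [k [def_a' dvd_a1]]] : dvdS a' (b * p ^+ n).
    by exists c; apply: (mulfI p0); rewrite mulrCA -exprS def_bp def_a; ring.
  by exists a1, k.+1; rewrite def_a def_a' exprS; split=> //; ring.
by apply: IHn; exists c'; apply: (mulfI p0); rewrite mulrCA -exprS def_bp def_c; ring.
Qed.

Lemma dvdS_prime_pow p c n : irreducibleS p -> dvdS c (p ^+ n) ->
  exists v k, unitS v /\ c = v * p ^+ k.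
Proof.
move=> irr_p; rewrite -[p ^+ n]mul1r => /(dvdS_mul_prime_pow irr_p) [v [k [-> dvd_v1]]].
by exists v, k; split=> //; apply: dvdS_unit dvd_v1 unitS1.
Qed.

Lemma dvdS_cancel_prime_pow p a b n : irreducibleS p -> ~ dvdS p a ->
  dvdS a (b * p ^+ n) -> dvdS a b.
Proof.
move=> irr_p Np_a /(dvdS_mul_prime_pow irr_p) [a1 [[|k] [def_a dvd_a1]]].
  by rewrite def_a expr0 mulr1.
by case: Np_a; rewrite def_a exprS mulrCA; apply: dvdS_mulIr.
Qed.

Lemma prime_pow_split p a : irreducibleS p -> a != 0 ->
  exists m b, a = p ^+ m * b /\ ~ dvdS p b.
Proof.
move=> irr_p /ufd_factor [u [l [Uu irr_l ->]]].
elim: l u Uu irr_l => [|q l IHl] u Uu irr_l.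
  by exists 0%N, u; rewrite big_nil expr0 mulr1 mul1r; split=> //; apply: irrS_ndvd_unit.
have [|m [b [def_ul Np_b]]] := IHl u Uu; first by move=> r lr; apply/irr_l/mem_behead.
have irr_q := irr_l q (mem_head q l); rewrite big_cons mulrCA def_ul.
have [[c def_q] | Np_q] := classic (dvdS p q).
  have Uc : unitS c.
    by have [_ [_ /(_ _ _ def_q) [/(irrS_nunit irr_p) | ]]] := irr_q.
  exists m.+1, (c * b); rewrite def_q exprS; split; first by ring.
  by case/(irrS_prime irr_p) => [/(irrS_ndvd_unit irr_p Uc) | ].
exists m, (q * b); split; first by ring.
by case/(irrS_prime irr_p).
Qed.

Lemma dvdS_prod_prime_pow (f : nat -> S) (k : nat -> nat) n a :
  (forall j, (j < n)%N -> irreducibleS (f j)) ->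
  dvdS a (\prod_(0 <= j < n) f j ^+ k j) ->
  exists v (k' : nat -> nat), unitS v /\ a = v * \prod_(0 <= j < n) f j ^+ k' j.
Proof.
elim: n a => [|n IHn] a irr_f.
  rewrite big_geq // => /dvdS_unit/(_ unitS1) Ua.
  by exists a, (fun=> 0%N); rewrite big_geq // mulr1.
rewrite big_nat_recr //= => /(dvdS_mul_prime_pow (irr_f n (ltnSn n))).
case=> a1 [m [-> /IHn]] [|v [k' [Uv ->]]]; first by move=> j /ltnW/irr_f.
exists v, (fun j => if j == n then m else k' j); split=> //.
rewrite big_nat_recr //= eqxx -mulrA; congr (_ * (_ * _)).
by apply: eq_big_nat => j /andP[_ lt_jn]; rewrite ltn_eqF.
Qed.

Lemma prime_pow_square_even p m u a k : irreducibleS p -> ~ dvdS p m -> unitS u ->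
  p ^+ k * m = u * a ^+ 2 -> ~~ odd k.
Proof.
move=> irr_p Np_m Uu; have p0 := irrS_neq0 irr_p.
elim: k {-2}k (leqnn k) a => [|n IHn] [|[|k]] // le_kn a def_pm.
  have : dvdS p (u * a ^+ 2) by rewrite -def_pm expr1; apply: dvdS_mulIr.
  case/(irrS_prime irr_p) => [/(irrS_ndvd_unit irr_p Uu) // | /(irrS_dvd_exp irr_p) [b def_a]].
  case: Np_m; exists (u * b ^+ 2); apply: (mulfI p0).
  by rewrite -[p]expr1 def_pm def_a; ring.
have : dvdS p (u * a ^+ 2) by rewrite -def_pm !exprS -!mulrA; apply: dvdS_mulIr.
case/(irrS_prime irr_p) => [/(irrS_ndvd_unit irr_p Uu) // | /(irrS_dvd_exp irr_p) [b def_a]].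
rewrite /= negbK; apply: (IHn k _ b); first by rewrite -ltnS ltnW.
by apply: (mulfI (expf_neq0 2 p0)); rewrite mulrA -exprD def_pm def_a; ring.
Qed.

End UniqueFactorizationDomain.

Lemma perm_eq_injections m n (s t : seq nat) (f : 'I_m -> 'I_n) (g : 'I_n -> 'I_m) :
  size s = m -> size t = n -> injective f -> injective g ->
  (forall i : 'I_m, nth 0%N s i = nth 0%N t (f i)) -> perm_eq s t.
Proof.
move=> size_s size_t; subst m n => f_inj g_inj s_f.
have [f' fK f'K] := inj_card_bij f_inj (leq_card g g_inj).
have enum_nth (r : seq nat) : r = [seq nth 0%N r (val i) | i <- enum 'I_(size r)].
  by rewrite (map_comp (nth 0%N r) val) val_enum_ord -/(mkseq _ _) mkseq_nth.
rewrite [s]enum_nth [t]enum_nth (eq_map s_f) (map_comp (fun j => nth 0%N t (val j))).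
apply/perm_map/uniq_perm; first by rewrite map_inj_uniq //; apply: enum_uniq.
  exact: enum_uniq.
by move=> j; rewrite -[j]f'K map_f ?mem_enum.
Qed.

Lemma nth_map_ord_enum (T : Type) (x0 : T) n (b : 'I_n -> T) (i : 'I_n) :
  nth x0 (map b (enum 'I_n)) i = b i.
Proof. by rewrite (nth_map i) ?nth_ord_enum // size_enum_ord. Qed.

Definition factor_data (S : idomainType) (x u : S) (ps : seq S) (es : seq nat) :=
  [/\ unitS u, size ps = size es,
      forall i, (i < size ps)%N -> irreducibleS (nth 0 ps i),
      forall i j, (i < size ps)%N -> (j < size ps)%N -> i <> j ->
        coprimeS (nth 0 ps i) (nth 0 ps j)
    & x = u * \prod_(i < size ps) nth 0 ps i ^+ nth 0%N es i].

Lemma factor_data_factorization (S : idomainType) (x u : S) ps es :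
  factor_data x u ps es -> (forall i, (i < size es)%N -> (1 <= nth 0%N es i)%N) ->
  sorted leq es -> factorization x es.
Proof. by case=> *; exists u, ps. Qed.

Section FactorData.
Variable S : idomainType.
Hypothesis hS : is_UFD S.
Variables (x u : S) (ps : seq S) (es : seq nat).
Hypothesis dx : factor_data x u ps es.

Lemma factor_data_irrS i : (i < size ps)%N -> irreducibleS (nth 0 ps i).
Proof. by case: dx => _ _ irr_ps _ _; apply: irr_ps. Qed.

Lemma factor_data_index_uniq q i j : irreducibleS q -> (i < size ps)%N -> (j < size ps)%N ->
  dvdS q (nth 0 ps i) -> dvdS q (nth 0 ps j) -> i = j.
Proof.
case: dx => _ _ _ cop_ps _ irr_q lt_i lt_j dvd_qi dvd_qj.
by apply: NNPP => ne_ij; apply/(irrS_nunit irr_q)/(cop_ps i j).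
Qed.

Lemma factor_data_cofactor (i : 'I_(size ps)) w (k : 'I_(size ps) -> nat) : unitS w ->
  ~ dvdS (nth 0 ps i) (w * \prod_(j < size ps | j != i) nth 0 ps j ^+ k j).
Proof.
move=> Uw; have irr_p := factor_data_irrS (ltn_ord i).
case/(irrS_prime hS irr_p) => [/(irrS_ndvd_unit irr_p Uw) // |].
case/(irrS_dvd_big hS irr_p) => j [ne_ji /(irrS_dvd_exp hS irr_p) dvd_ij].
move/eqP: ne_ji; apply; apply/val_inj.
exact: factor_data_index_uniq irr_p (ltn_ord j) (ltn_ord i) dvd_ij (dvdS_refl _).
Qed.

Lemma factor_data_dvdS_exp (i : 'I_(size ps)) k :
  dvdS (nth 0 ps i ^+ k) x <-> (k <= nth 0%N es i)%N.
Proof.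
set p := nth 0 ps i; set e := nth 0%N es i.
have def_x : x = p ^+ e * (u * \prod_(j < size ps | j != i) nth 0 ps j ^+ nth 0%N es j).
  by case: dx => _ _ _ _ ->; rewrite (bigD1 i) //=; ring.
split=> [dvd_x | le_ke]; last by rewrite def_x; apply/dvdS_mulr/dvdS_exp2l.
rewrite leqNgt; apply/negP => lt_ek.
set cof := u * _ in def_x.
have [c def_c] := dvdS_trans (dvdS_exp2l p lt_ek) dvd_x.
have def_cof : cof = p * c.
  have p0 := irrS_neq0 (factor_data_irrS (ltn_ord i)).
  by apply: (mulfI (expf_neq0 e p0)); rewrite -def_x def_c exprSr mulrA.
have Uu : unitS u by case: dx.
apply: (@factor_data_cofactor i u (fun j : 'I_(size ps) => nth 0%N es j) Uu).
by rewrite -/cof def_cof; apply: dvdS_mulIr.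
Qed.

Lemma factor_data_irr_dvd q : irreducibleS q -> dvdS q x ->
  exists i : 'I_(size ps), dvdS q (nth 0 ps i).
Proof.
case: dx => Uu _ _ _ -> irr_q.
case/(irrS_prime hS irr_q) => [/(irrS_ndvd_unit irr_q Uu) // |].
by case/(irrS_dvd_big hS irr_q) => i [_ /(irrS_dvd_exp hS irr_q)]; exists i.
Qed.

End FactorData.

Section TwoFactorData.
Variable S : idomainType.
Hypothesis hS : is_UFD S.
Variables (x u v : S) (ps qs : seq S) (es fs : seq nat).
Hypotheses (dx : factor_data x u ps es) (dx' : factor_data x v qs fs).

Lemma factor_data_assoc (i : 'I_(size ps)) : (1 <= nth 0%N es i)%N ->
  exists j : 'I_(size qs), dvdS (nth 0 ps i) (nth 0 qs j) /\ dvdS (nth 0 qs j) (nth 0 ps i).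
Proof.
move/(factor_data_dvdS_exp hS dx i); rewrite expr1.
have irr_p := factor_data_irrS dx (ltn_ord i).
case/(factor_data_irr_dvd hS dx' irr_p) => j dvd_ij; exists j; split=> //.
exact: irrS_dvd_sym irr_p (factor_data_irrS dx' (ltn_ord j)) dvd_ij.
Qed.

Lemma factor_data_assoc_exp (i : 'I_(size ps)) (j : 'I_(size qs)) :
  dvdS (nth 0 ps i) (nth 0 qs j) -> dvdS (nth 0 qs j) (nth 0 ps i) ->
  nth 0%N es i = nth 0%N fs j.
Proof.
move=> dvd_ij dvd_ji; apply/eqP; rewrite eqn_leq; apply/andP; split.
  apply/(factor_data_dvdS_exp hS dx' j); apply: dvdS_trans (dvdS_exp2r _ dvd_ji) _.
  exact/(factor_data_dvdS_exp hS dx i).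
apply/(factor_data_dvdS_exp hS dx i); apply: dvdS_trans (dvdS_exp2r _ dvd_ij) _.
exact/(factor_data_dvdS_exp hS dx' j).
Qed.

End TwoFactorData.

Lemma factorization_uniq (S : idomainType) (hS : is_UFD S) (x : S) es fs :
  factorization x es -> factorization x fs -> es = fs.
Proof.
move=> [u [ps [Uu [size_ps [irr_ps [cop_ps [es_gt0 [sorted_es def_x]]]]]]]].
move=> [v [qs [Uv [size_qs [irr_qs [cop_qs [fs_gt0 [sorted_fs def_x']]]]]]]].
have dx : factor_data x u ps es by [].
have dx' : factor_data x v qs fs by [].
have pos_es (i : 'I_(size ps)) : (1 <= nth 0%N es i)%N by apply: es_gt0; rewrite -size_ps.
have pos_fs (j : 'I_(size qs)) : (1 <= nth 0%N fs j)%N by apply: fs_gt0; rewrite -size_qs.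
have [f f_assoc] := fin_all_exists (fun i => factor_data_assoc hS dx dx' (pos_es i)).
have [g g_assoc] := fin_all_exists (fun j => factor_data_assoc hS dx' dx (pos_fs j)).
apply: (sorted_eq leq_trans anti_leq sorted_es sorted_fs).
apply: (perm_eq_injections (f := f) (g := g) (esym size_ps) (esym size_qs)).
- move=> i i' eq_f; apply/val_inj; have [_ dvd_fi] := f_assoc i.
  have [_ dvd_fi'] := f_assoc i'; rewrite -eq_f in dvd_fi'.
  exact: (factor_data_index_uniq dx (irr_qs _ (ltn_ord (f i))) (ltn_ord i) (ltn_ord i')
    dvd_fi dvd_fi').
- move=> j j' eq_g; apply/val_inj; have [_ dvd_gj] := g_assoc j.
  have [_ dvd_gj'] := g_assoc j'; rewrite -eq_g in dvd_gj'.
  exact: (factor_data_index_uniq dx' (irr_ps _ (ltn_ord (g j))) (ltn_ord j) (ltn_ord j')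
    dvd_gj dvd_gj').
- by move=> i; have [dvd_if dvd_fi] := f_assoc i; exact: (factor_data_assoc_exp hS dx dx' dvd_if dvd_fi).
Qed.

Section FracS.
Variable S : idomainType.
Implicit Types a b : S.

Lemma fracS_inj : injective (@fracS S).
Proof. by move=> a b /eqP; rewrite tofrac_eq => /eqP. Qed.

Lemma fracS_eq0 a : (fracS a == 0) = (a == 0).
Proof. exact: tofrac_eq0. Qed.

Lemma fracS0 : fracS (0 : S) = 0.
Proof. exact: rmorph0. Qed.

Lemma fracS1 : fracS (1 : S) = 1.
Proof. exact: rmorph1. Qed.

Lemma fracSN : {morph @fracS S : a / - a}.
Proof. exact: rmorphN. Qed.

Lemma fracSB : {morph @fracS S : a b / a - b}.
Proof. exact: rmorphB. Qed.

Lemma fracSM : {morph @fracS S : a b / a * b}.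
Proof. exact: rmorphM. Qed.

Lemma fracSX a n : fracS (a ^+ n) = fracS a ^+ n.
Proof. exact: rmorphXn. Qed.

Lemma fracS_prod (I : Type) (r : seq I) (P : pred I) (f : I -> S) :
  fracS (\prod_(i <- r | P i) f i) = \prod_(i <- r | P i) fracS (f i).
Proof. exact: rmorph_prod. Qed.

Lemma fracSV a : unitS a -> fracS a^-1 = (fracS a)^-1.
Proof. exact: rmorphV. Qed.

End FracS.

Definition loc_unit (S : idomainType) (F : S) (z : {fraction S}) :=
  in_loc F z /\ exists2 w, in_loc F w & z * w = 1.

Definition loc_dvd (S : idomainType) (F : S) (d a : {fraction S}) :=
  exists2 c, in_loc F c & a = d * c.

Definition loc_irreducible (S : idomainType) (F : S) (p : {fraction S}) :=
  [/\ in_loc F p, p != 0, ~ loc_unit F p &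
      forall a b, in_loc F a -> in_loc F b -> p = a * b -> loc_unit F a \/ loc_unit F b].

Definition loc_coprime (S : idomainType) (F : S) (a b : {fraction S}) :=
  forall d, in_loc F d -> loc_dvd F d a -> loc_dvd F d b -> loc_unit F d.

Definition loc_factorization (S : idomainType) (F : S) (x : {fraction S}) (es : seq nat) :=
  exists w (qs : seq {fraction S}),
    [/\ loc_unit F w, size qs = size es,
        forall i, (i < size qs)%N -> loc_irreducible F (nth 0 qs i),
        forall i j, (i < size qs)%N -> (j < size qs)%N -> i <> j ->
          loc_coprime F (nth 0 qs i) (nth 0 qs j)
      & x = w * \prod_(i < size qs) nth 0 qs i ^+ nth 0%N es i].

Section Localization.
Variables (S : idomainType) (F : S).
Hypothesis F0 : F != 0.
Local Notation Fr := (fracS F).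

Lemma Fr_neq0 : Fr != 0.
Proof. by rewrite fracS_eq0. Qed.

Lemma FrX_neq0 n : Fr ^+ n != 0.
Proof. by rewrite expf_neq0 // Fr_neq0. Qed.

Lemma mul_frac_Fpow a b m n :
  fracS a / Fr ^+ m * (fracS b / Fr ^+ n) = fracS (a * b) / Fr ^+ (m + n).
Proof. by rewrite mulf_div fracSM exprD. Qed.

Lemma frac_Fpow_eq a b n : fracS a = fracS b / Fr ^+ n -> a * F ^+ n = b.
Proof. by move=> def_a; apply: fracS_inj; rewrite fracSM fracSX def_a divfK ?FrX_neq0. Qed.

Lemma frac_Fpow_shift a k n : fracS a / Fr ^+ n = fracS (a * F ^+ k) / Fr ^+ (n + k).
Proof. by rewrite fracSM fracSX exprD invfM mulrACA divff ?FrX_neq0 ?mulr1. Qed.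

Lemma prod_frac_Fpow (I : Type) (r : seq I) (P : pred I) (a : I -> S) (n : I -> nat) :
  \prod_(i <- r | P i) (fracS (a i) / Fr ^+ n i) =
  fracS (\prod_(i <- r | P i) a i) / Fr ^+ (\sum_(i <- r | P i) n i).
Proof.
elim: r => [|i r IHr]; first by rewrite !big_nil fracS1 expr0 divr1.
by rewrite !big_cons; case: ifP => // _; rewrite IHr mul_frac_Fpow.
Qed.

Lemma in_loc_fracS a : in_loc F (fracS a).
Proof. by exists a, 0%N; rewrite expr0 divr1. Qed.

Lemma in_loc0 : in_loc F 0.
Proof. by rewrite -fracS0; apply: in_loc_fracS. Qed.

Lemma in_loc1 : in_loc F 1.
Proof. by rewrite -fracS1; apply: in_loc_fracS. Qed.

Lemma in_locM z w : in_loc F z -> in_loc F w -> in_loc F (z * w).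
Proof. by move=> [a [m ->]] [b [n ->]]; exists (a * b), (m + n)%N; apply: mul_frac_Fpow. Qed.

Lemma in_locN z : in_loc F z -> in_loc F (- z).
Proof. by move=> [a [n ->]]; exists (- a), n; rewrite fracSN mulNr. Qed.

Lemma in_locX z n : in_loc F z -> in_loc F (z ^+ n).
Proof.
move=> Lz; elim: n => [|n IHn]; first by rewrite expr0; apply: in_loc1.
by rewrite exprS; apply: in_locM.
Qed.

Lemma in_loc_prod (I : Type) (r : seq I) (P : pred I) (f : I -> {fraction S}) :
  (forall i, P i -> in_loc F (f i)) -> in_loc F (\prod_(i <- r | P i) f i).
Proof. by move=> Lf; apply: big_ind => //; [apply: in_loc1 | apply: in_locM]. Qed.

Lemma in_loc_Fz (j : int) : in_loc F (Fr ^ j).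
Proof.
case: j => n; first by rewrite -exprnP -fracSX; apply: in_loc_fracS.
by rewrite NegzE -exprnN; exists 1, n.+1; rewrite fracS1 mul1r.
Qed.

Lemma loc_unit_fracS v : unitS v -> loc_unit F (fracS v).
Proof.
move=> Uv; split; first exact: in_loc_fracS.
by exists (fracS v^-1); [apply: in_loc_fracS | rewrite -fracSM mulrV // fracS1].
Qed.

Lemma loc_unit1 : loc_unit F 1.
Proof. by rewrite -fracS1; apply/loc_unit_fracS/unitS1. Qed.

Lemma loc_unit_Fz (j : int) : loc_unit F (Fr ^ j).
Proof.
split; first exact: in_loc_Fz.
by exists (Fr ^ (- j)); [apply: in_loc_Fz | rewrite -expfzDr ?Fr_neq0 // subrr expr0z].
Qed.

Lemma loc_unit_F : loc_unit F Fr.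
Proof. by rewrite -[Fr]expr1z; apply: loc_unit_Fz. Qed.

Lemma loc_unitM z w : loc_unit F z -> loc_unit F w -> loc_unit F (z * w).
Proof.
move=> [Lz [z' Lz' zz']] [Lw [w' Lw' ww']]; split; first exact: in_locM.
by exists (z' * w'); [apply: in_locM | rewrite mulrACA zz' ww' mulr1].
Qed.

Lemma loc_unit_neq0 z : loc_unit F z -> z != 0.
Proof. by move=> [_ [w _ zw]]; apply: contra_eq_neq zw => ->; rewrite mul0r eq_sym oner_neq0. Qed.

Lemma loc_unitV z : loc_unit F z -> loc_unit F z^-1.
Proof.
move=> Uz; have z0 := loc_unit_neq0 Uz; case: Uz => Lz [w Lw zw].
have -> : z^-1 = w by apply: (mulfI z0); rewrite zw divff.
by split=> //; exists z; rewrite // mulrC.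
Qed.

Lemma loc_unitX z n : loc_unit F z -> loc_unit F (z ^+ n).
Proof.
move=> Uz; elim: n => [|n IHn]; first by rewrite expr0; apply: loc_unit1.
by rewrite exprS; apply: loc_unitM.
Qed.

Lemma loc_unitN z : loc_unit F z -> loc_unit F (- z).
Proof.
move=> Uz; rewrite -mulN1r; apply: loc_unitM => //.
by rewrite -fracS1 -fracSN; apply: loc_unit_fracS; rewrite /unitS unitrN unitr1.
Qed.

Lemma loc_unit_prod (I : Type) (r : seq I) (P : pred I) (f : I -> {fraction S}) :
  (forall i, P i -> loc_unit F (f i)) -> loc_unit F (\prod_(i <- r | P i) f i).
Proof. by move=> Uf; apply: big_ind => //; [apply: loc_unit1 | apply: loc_unitM]. Qed.

Lemma loc_unit_mulFz z (j : int) : loc_unit F (z * Fr ^ j) -> loc_unit F z.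
Proof.
move=> Uzj; have -> : z = z * Fr ^ j * Fr ^ (- j).
  by rewrite -mulrA -expfzDr ?Fr_neq0 // subrr expr0z mulr1.
by apply: loc_unitM Uzj (loc_unit_Fz _).
Qed.

Lemma loc_unit_dvd_Fpow b c m n : b * c = F ^+ n -> loc_unit F (fracS b / Fr ^+ m).
Proof.
move=> def_Fn; split; first by exists b, m.
exists (fracS (c * F ^+ m) / Fr ^+ n); first by exists (c * F ^+ m), n.
by rewrite mul_frac_Fpow mulrA def_Fn -exprD addnC fracSX divff ?FrX_neq0.
Qed.

Lemma Fpow_divXz (k n : nat) : Fr ^+ k / Fr ^+ n = Fr ^ (k%:Z - n%:Z).
Proof. by rewrite expfzDr ?Fr_neq0 // exprnN -exprnP. Qed.

Lemma loc_unit_num z : loc_unit F z ->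
  exists a n m, z = fracS a / Fr ^+ n /\ dvdS a (F ^+ m).
Proof.
move=> [[a [n ->]] [w [b [m ->]]]]; rewrite mul_frac_Fpow => ab1.
exists a, n, (n + m)%N; split=> //; exists b; apply: fracS_inj.
by rewrite fracSX -[RHS](divfK (FrX_neq0 (n + m))) ab1 mul1r.
Qed.

Lemma loc_factorization_unit_mull w x es : loc_unit F w ->
  loc_factorization F (w * x) es -> loc_factorization F x es.
Proof.
move=> Uw [w' [qs [Uw' size_qs irr_qs cop_qs def_wx]]].
exists (w^-1 * w'), qs; split=> //; first exact/loc_unitM/Uw'/loc_unitV.
by rewrite -mulrA -def_wx mulKf ?loc_unit_neq0.
Qed.

End Localization.

Section LocIso.
Variables (S : idomainType) (F F' : S) (D : {fraction S} -> {fraction S}).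
Hypothesis hD : loc_ring_iso F F' D.

Lemma loc_iso_in z : in_loc F z -> in_loc F' (D z).
Proof. exact: hD.1. Qed.

Lemma loc_isoD z w : in_loc F z -> in_loc F w -> D (z + w) = D z + D w.
Proof. exact: hD.2.1. Qed.

Lemma loc_isoM z w : in_loc F z -> in_loc F w -> D (z * w) = D z * D w.
Proof. exact: hD.2.2.1. Qed.

Lemma loc_iso1 : D 1 = 1.
Proof. exact: hD.2.2.2.1. Qed.

Lemma loc_iso_inj z w : in_loc F z -> in_loc F w -> D z = D w -> z = w.
Proof. exact: hD.2.2.2.2.1. Qed.

Lemma loc_iso_surj w : in_loc F' w -> exists z, in_loc F z /\ D z = w.
Proof. exact: hD.2.2.2.2.2. Qed.

Lemma loc_iso0 : D 0 = 0.
Proof. by apply: (@addrI _ (D 0)); rewrite -loc_isoD ?addr0 //; apply: in_loc0. Qed.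

Lemma loc_isoN z : in_loc F z -> D (- z) = - D z.
Proof.
move=> Lz; apply/eqP; rewrite -addr_eq0 -loc_isoD ?addNr ?loc_iso0 //.
exact: in_locN.
Qed.

Lemma loc_isoB z w : in_loc F z -> in_loc F w -> D (z - w) = D z - D w.
Proof. by move=> Lz Lw; rewrite loc_isoD ?loc_isoN //; apply: in_locN. Qed.

Lemma loc_iso_prod (I : Type) (r : seq I) (P : pred I) (f : I -> {fraction S}) :
  (forall i, P i -> in_loc F (f i)) ->
  D (\prod_(i <- r | P i) f i) = \prod_(i <- r | P i) D (f i).
Proof.
move=> Lf; elim: r => [|i r IHr]; first by rewrite !big_nil loc_iso1.
rewrite !big_cons; case: ifP => // Pi.
by rewrite loc_isoM ?IHr //; [apply: Lf | apply: in_loc_prod].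
Qed.

Lemma loc_isoX z n : in_loc F z -> D (z ^+ n) = D z ^+ n.
Proof.
move=> Lz; elim: n => [|n IHn]; first by rewrite !expr0 loc_iso1.
by rewrite !exprS loc_isoM ?IHn //; apply: in_locX.
Qed.

Lemma loc_iso_unit z : loc_unit F z -> loc_unit F' (D z).
Proof.
move=> [Lz [w Lw zw]]; split; first exact: loc_iso_in.
by exists (D w); [apply: loc_iso_in | rewrite -loc_isoM // zw loc_iso1].
Qed.

Lemma loc_iso_unit_rev z : in_loc F z -> loc_unit F' (D z) -> loc_unit F z.
Proof.
move=> Lz [_ [w' Lw' Dzw']]; have [w [Lw def_w']] := loc_iso_surj Lw'.
split=> //; exists w => //; apply: loc_iso_inj; rewrite ?loc_isoM ?loc_iso1 ?def_w' //.
  exact: in_locM.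
exact: in_loc1.
Qed.

Lemma loc_iso_neq0 z : in_loc F z -> z != 0 -> D z != 0.
Proof.
move=> Lz; apply: contra_neq => Dz0; apply: loc_iso_inj; rewrite ?loc_iso0 //.
exact: in_loc0.
Qed.

Lemma loc_iso_dvd_rev d a : in_loc F d -> in_loc F a ->
  loc_dvd F' (D d) (D a) -> loc_dvd F d a.
Proof.
move=> Ld La [c' Lc' Da]; have [c [Lc def_c']] := loc_iso_surj Lc'.
by exists c => //; apply: loc_iso_inj; rewrite ?loc_isoM ?def_c' //; apply: in_locM.
Qed.

Lemma loc_iso_irreducible p : loc_irreducible F p -> loc_irreducible F' (D p).
Proof.
move=> [Lp p0 NUp irr_p]; split; [exact: loc_iso_in | exact: loc_iso_neq0 | |].
  by move/(loc_iso_unit_rev Lp).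
move=> a' b' La' Lb' def_Dp.
have [a [La def_a']] := loc_iso_surj La'; have [b [Lb def_b']] := loc_iso_surj Lb'; subst a' b'.
have : p = a * b by apply: loc_iso_inj; rewrite ?loc_isoM //; apply: in_locM.
by case/(irr_p _ _ La Lb) => /loc_iso_unit; [left | right].
Qed.

Lemma loc_iso_coprime p q : in_loc F p -> in_loc F q ->
  loc_coprime F p q -> loc_coprime F' (D p) (D q).
Proof.
move=> Lp Lq cop_pq d' Ld' dvd_p dvd_q; have [d [Ld def_d']] := loc_iso_surj Ld'; subst d'.
by apply/loc_iso_unit/cop_pq; rewrite //; apply: loc_iso_dvd_rev.
Qed.

Lemma loc_iso_factorization x es : loc_factorization F x es -> loc_factorization F' (D x) es.
Proof.
move=> [w [qs [Uw size_qs irr_qs cop_qs def_x]]].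
have Lqs i : (i < size qs)%N -> in_loc F (nth 0 qs i) by move/irr_qs; case.
exists (D w), (map D qs); rewrite size_map; split=> //.
- exact: loc_iso_unit.
- by move=> i lt_i; rewrite (nth_map 0) //; apply/loc_iso_irreducible/irr_qs.
- move=> i j lt_i lt_j ne_ij; rewrite !(nth_map 0) //.
  exact: loc_iso_coprime (Lqs i lt_i) (Lqs j lt_j) (cop_qs i j lt_i lt_j ne_ij).
rewrite def_x loc_isoM; first last.
- by apply: in_loc_prod => i _; apply/in_locX/Lqs.
- by case: Uw.
rewrite loc_iso_prod; last by move=> i _; apply/in_locX/Lqs.
by congr (_ * _); apply: eq_bigr => i _; rewrite loc_isoX ?(nth_map 0) //; apply: Lqs.
Qed.

Lemma loc_isoV z : loc_unit F z -> D z^-1 = (D z)^-1.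
Proof.
move=> Uz; have UDz := loc_iso_unit Uz.
have DzV : D z * D z^-1 = 1.
  rewrite -loc_isoM ?divff ?loc_iso1 //; first exact: loc_unit_neq0 Uz.
    by case: Uz.
  by case: (loc_unitV Uz).
by rewrite -[RHS]mulr1 -DzV mulKf //; apply: loc_unit_neq0 UDz.
Qed.

Lemma loc_isoXz z (j : int) : loc_unit F z -> D (z ^ j) = D z ^ j.
Proof.
move=> Uz; have Lz : in_loc F z by case: Uz.
case: j => n; first by rewrite -!exprnP loc_isoX.
by rewrite NegzE -!exprnN loc_isoV ?loc_isoX //; apply: loc_unitX.
Qed.

End LocIso.

Section IrreducibleLocalization.
Variable S : idomainType.
Hypothesis hS : is_UFD S.
Variable F : S.
Hypothesis irr_F : irreducibleS F.
Local Notation Fr := (fracS F).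

Let F0 : F != 0 := irrS_neq0 irr_F.

Lemma loc_unit_rep z : loc_unit F z -> exists v (j : int), unitS v /\ z = fracS v * Fr ^ j.
Proof.
case/(loc_unit_num F0) => a [n [m [-> /(dvdS_prime_pow hS irr_F) [v [k [Uv ->]]]]]].
by exists v, (k%:Z - n%:Z); rewrite fracSM fracSX -mulrA Fpow_divXz.
Qed.

Lemma fracS_mul_Fz_exp0 x y (j : int) : ~ dvdS F x -> ~ dvdS F y ->
  fracS x = fracS y * Fr ^ j -> j = 0.
Proof.
move=> NFx NFy; case: j => [[|n] | n] //.
  rewrite -exprnP -fracSX -fracSM => /fracS_inj def_x; case: NFx.
  by rewrite def_x mulrC exprS -mulrA; apply: dvdS_mulIr.
rewrite NegzE -exprnN => def_x; case: NFy.
have : fracS x * Fr ^+ n.+1 = fracS y by rewrite def_x -mulrA mulVf ?mulr1 ?FrX_neq0.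
by rewrite -fracSX -fracSM => /fracS_inj <-; rewrite mulrC exprS -mulrA; apply: dvdS_mulIr.
Qed.

Lemma fracS_unit_Fz_inj u1 u2 (a b : int) : unitS u1 -> unitS u2 ->
  fracS u1 * Fr ^ a = fracS u2 * Fr ^ b -> a = b.
Proof.
move=> Uu1 Uu2 eq_ab; apply/eqP; rewrite eq_sym -subr_eq0; apply/eqP.
apply: (fracS_mul_Fz_exp0 (irrS_ndvd_unit irr_F Uu1) (irrS_ndvd_unit irr_F Uu2)).
by rewrite expfzDr ?Fr_neq0 // mulrA -eq_ab -mulrA -expfzDr ?Fr_neq0 // subrr expr0z mulr1.
Qed.

Lemma loc_unit_fracS_rev c : loc_unit F (fracS c) -> ~ dvdS F c -> unitS c.
Proof.
move=> /loc_unit_rep [v [j [Uv def_c]]] NFc.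
move: (def_c); rewrite (fracS_mul_Fz_exp0 NFc (irrS_ndvd_unit irr_F Uv) def_c).
by rewrite expr0z mulr1 => /fracS_inj ->.
Qed.

Lemma loc_irreducible_fracS p : irreducibleS p -> ~ dvdS F p -> loc_irreducible F (fracS p).
Proof.
move=> irr_p NFp; have p0 := irrS_neq0 irr_p.
split; [exact: in_loc_fracS | by rewrite fracS_eq0 | |].
  by move/loc_unit_fracS_rev/(_ NFp); apply: irrS_nunit irr_p.
move=> z w [a [m ->]] [b [n ->]]; rewrite mul_frac_Fpow => /(frac_Fpow_eq F0) def_p.
have : dvdS p (a * b) by rewrite -def_p; apply: dvdS_mulIr.
case/(irrS_prime hS irr_p) => [[a' def_a] | [b' def_b]].
  have def_F : b * a' = F ^+ (m + n) by apply: (mulfI p0); rewrite def_p def_a; ring.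
  by right; apply: (loc_unit_dvd_Fpow F0 n def_F).
have def_F : a * b' = F ^+ (m + n) by apply: (mulfI p0); rewrite def_p def_b; ring.
by left; apply: (loc_unit_dvd_Fpow F0 m def_F).
Qed.

Lemma in_loc_rep d : in_loc F d -> d != 0 ->
  exists a k n, ~ dvdS F a /\ d = fracS (a * F ^+ k) / Fr ^+ n.
Proof.
move=> [b [n def_d]] d0.
have b0 : b != 0 by apply: contraNneq d0 => b0; rewrite def_d b0 fracS0 mul0r.
have [k [a [def_b NFa]]] := prime_pow_split hS irr_F b0.
by exists a, k, n; split=> //; rewrite def_d def_b (mulrC (F ^+ k)).
Qed.

Lemma loc_dvd_fracS_rev a k n p : ~ dvdS F a ->
  loc_dvd F (fracS (a * F ^+ k) / Fr ^+ n) (fracS p) -> dvdS a p.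
Proof.
move=> NFa [c [b [m ->]]]; rewrite mul_frac_Fpow => /(frac_Fpow_eq F0) def_p.
apply: (dvdS_cancel_prime_pow hS irr_F NFa (n := (n + m)%N)).
by exists (F ^+ k * b); rewrite def_p mulrA.
Qed.

Lemma loc_unit_rep_unit a k n : unitS a -> loc_unit F (fracS (a * F ^+ k) / Fr ^+ n).
Proof.
move=> Ua; have def_F : a * F ^+ k * a^-1 = F ^+ k by rewrite mulrAC mulrV // mul1r.
exact: (loc_unit_dvd_Fpow F0 n def_F).
Qed.

Lemma loc_coprime_fracS p q : p != 0 -> coprimeS p q -> loc_coprime F (fracS p) (fracS q).
Proof.
move=> p0 cop_pq d Ld dvd_dp dvd_dq.
have d0 : d != 0.
  apply: contra_neq (p0) => d0; apply: fracS_inj.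
  by case: dvd_dp => c _ ->; rewrite d0 mul0r fracS0.
have [a [k [n [NFa def_d]]]] := in_loc_rep Ld d0.
rewrite def_d in dvd_dp dvd_dq *; apply: loc_unit_rep_unit.
by apply: cop_pq; [apply: loc_dvd_fracS_rev NFa dvd_dp | apply: loc_dvd_fracS_rev NFa dvd_dq].
Qed.

Lemma loc_factorization_fracS x es : factorization x es -> ~ dvdS F x ->
  loc_factorization F (fracS x) es.
Proof.
move=> [u [ps [Uu [size_ps [irr_ps [cop_ps [es_gt0 [_ def_x]]]]]]]] NFx.
have NFps i : (i < size ps)%N -> ~ dvdS F (nth 0 ps i).
  move=> lt_i dvd_Fp; apply: NFx; apply: dvdS_trans dvd_Fp _; rewrite def_x; apply: dvdS_mull.
  pose i' : 'I_(size ps) := Ordinal lt_i.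
  apply: dvdS_trans (dvdS_bigD1 (fun j : 'I_(size ps) => nth 0 ps j ^+ nth 0%N es j) i').
  by apply: dvdS_exp; apply: es_gt0; rewrite -size_ps.
exists (fracS u), (map (@fracS S) ps); rewrite size_map; split=> //.
- exact: loc_unit_fracS.
- move=> i lt_i; rewrite (nth_map 0) //.
  by apply: loc_irreducible_fracS; [apply: irr_ps | apply: NFps].
- move=> i j lt_i lt_j ne_ij; rewrite !(nth_map 0) //.
  by apply: loc_coprime_fracS; [apply/irrS_neq0/irr_ps | apply: cop_ps].
rewrite def_x fracSM fracS_prod; congr (_ * _); apply: eq_bigr => i _.
by rewrite fracSX (nth_map 0).
Qed.

Lemma loc_irreducible_rep q : loc_irreducible F q ->
  exists b (j : int), [/\ irreducibleS b, ~ dvdS F b & q = fracS b * Fr ^ j].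
Proof.
move=> [Lq q0 NUq irr_q]; have [b [k [n [NFb def_q]]]] := in_loc_rep Lq q0.
set j := (k%:Z - n%:Z); exists b, j.
have {}def_q : q = fracS b * Fr ^ j by rewrite def_q fracSM fracSX -mulrA Fpow_divXz.
split=> //; split; first by apply: contraNneq q0 => b0; rewrite def_q b0 fracS0 mul0r.
split=> [Ub | c d def_b].
  by apply: NUq; rewrite def_q; apply: loc_unitM (loc_unit_fracS F Ub) (loc_unit_Fz _ _).
have NFc : ~ dvdS F c by move=> dvd_Fc; apply: NFb; rewrite def_b; apply: dvdS_mulr.
have NFd : ~ dvdS F d by move=> dvd_Fd; apply: NFb; rewrite def_b; apply: dvdS_mull.
have def_q' : q = fracS c * (fracS d * Fr ^ j) by rewrite def_q def_b fracSM mulrA.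
have Ld := in_locM (in_loc_fracS F d) (in_loc_Fz F j).
have [Uc | Udj] := irr_q _ _ (in_loc_fracS F c) Ld def_q'.
  by left; apply: loc_unit_fracS_rev Uc NFc.
by right; apply: loc_unit_fracS_rev (loc_unit_mulFz F0 Udj) NFd.
Qed.

Lemma fracS_eq_unit_mul x y w : ~ dvdS F x -> ~ dvdS F y -> loc_unit F w ->
  fracS x = w * fracS y -> exists2 v, unitS v & x = v * y.
Proof.
move=> NFx NFy /loc_unit_rep [v [J [Uv ->]]] def_x; exists v => //.
have NFvy : ~ dvdS F (v * y).
  by case/(irrS_prime hS irr_F) => [/(irrS_ndvd_unit irr_F Uv) | /NFy].
have {}def_x : fracS x = fracS (v * y) * Fr ^ J by rewrite def_x fracSM mulrAC.
by move: (def_x); rewrite (fracS_mul_Fz_exp0 NFx NFvy def_x) expr0z mulr1 => /fracS_inj.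
Qed.

Lemma coprimeS_of_loc b b' (j j' : int) : ~ dvdS F b ->
  loc_coprime F (fracS b * Fr ^ j) (fracS b' * Fr ^ j') -> coprimeS b b'.
Proof.
have loc_dvd_d d c (l : int) : dvdS d c -> loc_dvd F (fracS d) (fracS c * Fr ^ l).
  move=> [e ->]; exists (fracS e * Fr ^ l); last by rewrite fracSM mulrA.
  exact/in_locM/in_loc_Fz/in_loc_fracS.
move=> NFb cop_bb' d dvd_db dvd_db'; apply: loc_unit_fracS_rev.
  by apply: cop_bb'; [apply: in_loc_fracS | apply: loc_dvd_d | apply: loc_dvd_d].
by move=> dvd_Fd; apply/NFb/(dvdS_trans dvd_Fd).
Qed.

Lemma factor_data_of_loc x es : loc_factorization F (fracS x) es -> ~ dvdS F x ->
  exists v (ps : seq S), factor_data x v ps es.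
Proof.
move=> [w [qs [Uw size_qs irr_qs cop_qs def_x]]] NFx.
have [b rep_b] := fin_all_exists (fun i : 'I_(size qs) =>
  loc_irreducible_rep (irr_qs i (ltn_ord i))).
have [j rep_q] := fin_all_exists rep_b.
have irr_b i : irreducibleS (b i) by case: (rep_q i).
have NFb i : ~ dvdS F (b i) by case: (rep_q i).
have def_qs (i : 'I_(size qs)) : nth 0 qs i = fracS (b i) * Fr ^ j i by case: (rep_q i).
pose B := \prod_(i < size qs) b i ^+ nth 0%N es i.
pose w' := w * \prod_(i < size qs) (Fr ^ j i) ^+ nth 0%N es i.
have NFB : ~ dvdS F B.
  by case/(irrS_dvd_big hS irr_F) => i [_ /(irrS_dvd_exp hS irr_F) /NFb].
have [||v Uv def_vB] := @fracS_eq_unit_mul x B w' NFx NFB.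
- by apply/loc_unitM/loc_unit_prod => // i _; apply/loc_unitX/loc_unit_Fz.
- rewrite def_x -mulrA fracS_prod -big_split; congr (_ * _); apply: eq_bigr => i _.
  by rewrite def_qs exprMn fracSX mulrC.
exists v, [seq b i | i <- enum 'I_(size qs)].
split=> //; rewrite ?size_map -?enumT ?size_enum_ord //.
- by move=> i lt_i; rewrite -[i]/(val (Ordinal lt_i)) nth_map_ord_enum.
- move=> i k lt_i lt_k ne_ik.
  rewrite -[i]/(val (Ordinal lt_i)) -[k]/(val (Ordinal lt_k)) !nth_map_ord_enum.
  apply: (coprimeS_of_loc (j := j (Ordinal lt_i)) (j' := j (Ordinal lt_k)) (NFb _)).
  by rewrite -!def_qs; apply: cop_qs.
by rewrite def_vB; congr (_ * _); apply: eq_bigr => i _; rewrite nth_map_ord_enum.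
Qed.

End IrreducibleLocalization.

Lemma fracS_unitXz (S : idomainType) (v : S) (l : int) : unitS v ->
  exists2 w, unitS w & fracS v ^ l = fracS w.
Proof.
move=> Uv; case: l => n; first by exists (v ^+ n); [apply: unitSX | rewrite -exprnP fracSX].
exists (v ^+ n.+1)^-1; first exact/unitSV/unitSX.
by rewrite NegzE -exprnN fracSV ?fracSX //; apply: unitSX.
Qed.

Section IrreducibleIso.
Variable S : idomainType.
Hypothesis hS : is_UFD S.
Variables (F F' : S) (D : {fraction S} -> {fraction S}).
Hypotheses (irr_F : irreducibleS F) (irr_F' : irreducibleS F').
Hypotheses (hD : loc_ring_iso F F' D) (hDU : preserves_units D).
Local Notation Fr := (fracS F).
Local Notation Fr' := (fracS F').

Let F0 : F != 0 := irrS_neq0 irr_F.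
Let F'0 : F' != 0 := irrS_neq0 irr_F'.

Lemma loc_iso_F : exists2 v, unitS v & D Fr = fracS v * Fr' \/ D Fr = fracS v / Fr'.
Proof.
have [v [j [Uv def_DF]]] := loc_unit_rep hS irr_F' (loc_iso_unit hD (loc_unit_F F0)).
have [z [Lz def_F']] := loc_iso_surj hD (in_loc_fracS F' F').
have /(loc_unit_rep hS irr_F) [u [l [Uu def_z]]] : loc_unit F z.
  by apply: (loc_iso_unit_rev hD Lz); rewrite def_F'; apply: loc_unit_F.
have [u' [Uu' def_Du]] := hDU.1 u Uu.
have [w Uw def_w] := fracS_unitXz l Uv.
have : fracS 1 * Fr' ^ 1 = fracS (u' * w) * Fr' ^ (j * l).
  rewrite fracS1 mul1r expr1z -{1}def_F' def_z (loc_isoM hD);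
    [|exact: in_loc_fracS | exact: in_loc_Fz].
  rewrite def_Du (loc_isoXz hD _ (loc_unit_F F0)) def_DF expfzMl def_w exprz_exp.
  by rewrite fracSM mulrA.
move/(fracS_unit_Fz_inj irr_F' unitS1 (unitSM Uu' Uw)) => jl1.
have : j \is a intUnitRing.unitz by apply: (@intUnitRing.unitzPl _ l); rewrite mulrC -jl1.
rewrite qualifE => /orP[] /eqP j_pm1; exists v => //; rewrite def_DF j_pm1.
  by left; rewrite expr1z.
by right; rewrite -exprnN expr1.
Qed.

Lemma loc_iso_unitS : exists theta : S -> S, [/\
  forall C, unitS C -> unitS (theta C) /\ D (fracS C) = fracS (theta C),
  forall C1 C2, unitS C1 -> unitS C2 -> theta C1 = theta C2 -> C1 = C2 &
  forall c, unitS c -> exists2 C, unitS C & theta C = c].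
Proof.
have [theta theta_spec] : exists theta : S -> S, forall C, unitS C ->
    unitS (theta C) /\ D (fracS C) = fracS (theta C).
  apply: (choice (fun C v => unitS C -> unitS v /\ D (fracS C) = fracS v)) => C.
  have [UC | NUC] := classic (unitS C); last by exists 0.
  by have [v [Uv ->]] := hDU.1 C UC; exists v.
exists theta; split=> // [C1 C2 /theta_spec[_ DC1] /theta_spec[_ DC2] eq12 | c Uc].
  apply/fracS_inj/(loc_iso_inj hD); rewrite ?DC1 ?DC2 ?eq12 //; exact: in_loc_fracS.
have [C [UC DC]] := hDU.2 c Uc.
by exists C => //; apply: fracS_inj; rewrite -DC (theta_spec C UC).2.
Qed.

(* With D F = v0 F'^(+-1): for the sign +1, D (F - C) = v0 (F' - theta C / v0), and for -1,
   D (F - C) = - (theta C / F') (F' - v0 / theta C). *)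
Lemma loc_iso_shift : exists Theta : S -> S,
  [/\ forall C, unitS C -> unitS (Theta C),
      forall C1 C2, unitS C1 -> unitS C2 -> Theta C1 = Theta C2 -> C1 = C2,
      forall C', unitS C' -> exists C, unitS C /\ Theta C = C' &
      forall C, unitS C ->
        exists2 w, loc_unit F' w & D (fracS (F - C)) = w * fracS (F' - Theta C)].
Proof.
have [theta [theta_spec theta_inj theta_surj]] := loc_iso_unitS.
have Utheta C : unitS C -> unitS (theta C) by case/theta_spec.
have D_shift C : unitS C -> D (fracS (F - C)) = D Fr - fracS (theta C).
  by move=> UC; rewrite fracSB (loc_isoB hD) ?(theta_spec C UC).2 //; apply: in_loc_fracS.
have [v0 Uv0 [DF | DF]] := loc_iso_F.
  exists (fun C => theta C * v0^-1); split.
  - by move=> C UC; apply: unitSM (Utheta C UC) (unitSV Uv0).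
  - by move=> C1 C2 UC1 UC2 /(mulIr (unitSV Uv0)); apply: theta_inj.
  - move=> C' UC'; have [C UC thetaC] := theta_surj _ (unitSM UC' Uv0).
    by exists C; rewrite thetaC mulrK.
  move=> C UC; exists (fracS v0); first exact: loc_unit_fracS.
  by rewrite D_shift //= DF -fracSM -fracSB -fracSM mulrBr mulrCA mulrV ?mulr1.
exists (fun C => v0 * (theta C)^-1); split.
- by move=> C UC; apply/unitSM/unitSV/Utheta.
- by move=> C1 C2 UC1 UC2 /(mulrI Uv0)/invr_inj; apply: theta_inj.
- move=> C' UC'; have [C UC thetaC] := theta_surj _ (unitSM Uv0 (unitSV UC')).
  by exists C; rewrite thetaC invrM ?unitrV // invrK mulrCA mulrV ?mulr1.
move=> C UC; have Uc := loc_unit_fracS F' (Utheta C UC).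
exists (- fracS (theta C) / Fr').
  by rewrite mulNr; apply: loc_unitN (loc_unitM Uc (loc_unitV (loc_unit_F F'0))).
rewrite D_shift //= DF fracSB fracSM (fracSV (Utheta C UC)).
rewrite mulrBr divfK ?Fr_neq0 // !mulNr opprK addrC; congr (_ + _).
by rewrite mulrCA mulrAC divff ?mul1r //; apply: loc_unit_neq0 Uc.
Qed.

Lemma loc_iso_shift_factorization : exists Theta : S -> S,
  [/\ forall C, unitS C -> unitS (Theta C),
      forall C1 C2, unitS C1 -> unitS C2 -> Theta C1 = Theta C2 -> C1 = C2,
      forall C', unitS C' -> exists C, unitS C /\ Theta C = C' &
      forall C, unitS C -> forall es es', factorization (F - C) es ->
        factorization (F' - Theta C) es' -> es = es'].
Proof.
have [Theta [UTheta Theta_inj Theta_surj Theta_shift]] := loc_iso_shift.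
exists Theta; split=> // C UC es es' fac_es fac_es'.
have NF'C := irrS_ndvd_subr irr_F' (UTheta C UC).
have := loc_factorization_fracS hS irr_F fac_es (irrS_ndvd_subr irr_F UC).
move/(loc_iso_factorization hD).
have [w Uw ->] := Theta_shift C UC; move/(loc_factorization_unit_mull Uw).
case/(factor_data_of_loc hS irr_F')/(_ NF'C) => v [ps /factor_data_factorization fac].
have [_ [_ [_ [_ [_ [_ [es_gt0 [sorted_es _]]]]]]]] := fac_es.
exact: (factorization_uniq hS (fac es_gt0 sorted_es) fac_es').
Qed.

End IrreducibleIso.

(* The classes of the [g i] in U(S[1/F]) / U(S) U(S[1/F])^2 are linearly dependent
   over F_2, the support of the relation being the symmetric difference of [T1] and [T2]. *)
Definition sq_dependent (S : idomainType) (F : S) K (g : 'I_K -> {fraction S}) :=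
  exists T1 T2 : {set 'I_K}, T1 != T2 /\ exists u h, [/\ unitS u, loc_unit F h &
    (\prod_(i in T1) g i) * (\prod_(i in T2) g i) = fracS u * h ^+ 2].

Section SqDependentIso.
Variables (S : idomainType) (F F' : S) (D : {fraction S} -> {fraction S}).
Hypotheses (hD : loc_ring_iso F F' D) (hDU : preserves_units D).
Variables (K : nat) (g : 'I_K -> {fraction S}) (g' : 'I_K -> {fraction S}).
Hypotheses (Lg : forall i, in_loc F (g i)) (def_g' : forall i, g' i = D (g i)).

Let Lg_prod (T : {set 'I_K}) : in_loc F (\prod_(i in T) g i).
Proof. exact: in_loc_prod. Qed.

Let D_prod (T : {set 'I_K}) : D (\prod_(i in T) g i) = \prod_(i in T) g' i.
Proof. by rewrite (loc_iso_prod hD) //; apply: eq_bigr => i _; rewrite def_g'. Qed.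

Lemma sq_dependent_loc_iso : sq_dependent F g -> sq_dependent F' g'.
Proof.
move=> [T1 [T2 [neT [u [h [Uu Uh def_T]]]]]]; have [v [Uv Du]] := hDU.1 u Uu.
have Lh : in_loc F h by case: Uh.
exists T1, T2; split=> //; exists v, (D h); split=> //; first exact: loc_iso_unit Uh.
rewrite -!D_prod -Du -(loc_isoX hD) // -!(loc_isoM hD) ?def_T //.
  exact: in_loc_fracS.
exact: in_locX Lh.
Qed.

Lemma sq_dependent_loc_iso_rev : sq_dependent F' g' -> sq_dependent F g.
Proof.
move=> [T1 [T2 [neT [v [h' [Uv Uh' def_T]]]]]].
have [u [Uu Du]] := hDU.2 v Uv; have [h [Lh Dh]] := loc_iso_surj hD Uh'.1.
exists T1, T2; split=> //; exists u, h; split=> //.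
  by apply: (loc_iso_unit_rev hD Lh); rewrite Dh.
have Lh2 := in_locX 2 Lh; have Lu := in_loc_fracS F u.
apply: (loc_iso_inj hD); [exact: in_locM | exact: in_locM |].
by rewrite !(loc_isoM hD) // !D_prod Du Dh def_T expr2.
Qed.

End SqDependentIso.

Section FactorRank.
Variable S : idomainType.
Hypothesis hS : is_UFD S.
Variables (F uF : S) (ps : seq S) (es : seq nat).
Hypotheses (F0 : F != 0) (dF : factor_data F uF ps es).
Hypothesis es_gt0 : forall i, (i < size es)%N -> (1 <= nth 0%N es i)%N.
Local Notation Fr := (fracS F).
Local Notation Q := (size ps).
Local Notation P j := (nth 0 ps j).
Local Notation e j := (nth 0%N es j).

Let UuF : unitS uF.
Proof. by case: dF. Qed.

Lemma factor_dvd_F (i : 'I_Q) : dvdS (P i) F.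
Proof.
case: dF => _ size_ps _ _ ->; apply: dvdS_mull.
apply: dvdS_trans (dvdS_bigD1 (fun j : 'I_Q => P j ^+ e j) i).
by apply/dvdS_exp/es_gt0; rewrite -size_ps.
Qed.

Lemma loc_unit_factor (i : 'I_Q) : loc_unit F (fracS (P i)).
Proof.
have [c def_F] := factor_dvd_F i.
by have := @loc_unit_dvd_Fpow _ F F0 (P i) c 0 1 (esym def_F); rewrite expr0 divr1.
Qed.

Lemma FpowE n : F ^+ n = uF ^+ n * \prod_(i < Q) P i ^+ (e i * n).
Proof.
case: dF => _ _ _ _ {1}->; rewrite exprMn -prodrXl.
by congr (_ * _); apply: eq_bigr => i _; rewrite exprM.
Qed.

Definition monomial v (k : nat -> nat) n := fracS (v * \prod_(0 <= j < Q) P j ^+ k j) / Fr ^+ n.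

Lemma loc_unit_monomial z : loc_unit F z -> exists v k n, unitS v /\ z = monomial v k n.
Proof.
case/(loc_unit_num F0) => a [n [m [-> dvd_a]]].
have : dvdS a (\prod_(0 <= j < Q) P j ^+ (e j * m)).
  by apply: dvdS_unit_mull (unitSX m UuF) _; rewrite big_mkord -FpowE.
case/(dvdS_prod_prime_pow hS (factor_data_irrS dF)) => v [k [Uv def_a]].
by exists v, k, n; rewrite def_a.
Qed.

Lemma monomialM v1 k1 n1 v2 k2 n2 :
  monomial v1 k1 n1 * monomial v2 k2 n2 =
  monomial (v1 * v2) (fun j => k1 j + k2 j)%N (n1 + n2).
Proof.
rewrite /monomial mul_frac_Fpow mulrACA -big_split /=.
by congr (fracS (_ * _) / _); apply: eq_bigr => j _; rewrite exprD.
Qed.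

Lemma prod_monomial (I : Type) (r : seq I) (R : pred I) v k n :
  \prod_(i <- r | R i) monomial (v i) (k i) (n i) =
  monomial (\prod_(i <- r | R i) v i) (fun j => \sum_(i <- r | R i) k i j)
           (\sum_(i <- r | R i) n i).
Proof.
rewrite prod_frac_Fpow /monomial big_split /=; congr (fracS (_ * _) / _).
rewrite (exchange_big_dep xpredT) //=; apply: eq_bigr => j _.
by rewrite (eq_bigl R) ?prodrXr // => i; rewrite andbT.
Qed.

Lemma monomial_even_square v k n : (forall j, (j < Q)%N -> ~~ odd (k j + n * e j)) ->
  exists2 h, loc_unit F h & monomial v k n = fracS (v * uF ^+ n) * h ^+ 2.
Proof.
move=> k_even; pose m j := ((k j + n * e j)./2)%N.
pose b := \prod_(0 <= j < Q) P j ^+ m j.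
exists (fracS b / Fr ^+ n).
  have [c def_F] : dvdS b (F ^+ (\sum_(0 <= j < Q) m j)).
    rewrite -prodrXr; apply: dvdS_prod => j; rewrite mem_index_iota => /andP[_ lt_j].
    exact/dvdS_exp2r/(factor_dvd_F (Ordinal lt_j)).
  exact: (loc_unit_dvd_Fpow F0 n (esym def_F)).
rewrite /monomial (frac_Fpow_shift F0 _ n) expr_div_n -exprM muln2 -addnn.
rewrite mulrA -(fracSX b) -fracSM FpowE; congr (fracS _ / _).
have b2 : b ^+ 2 = \prod_(0 <= j < Q) P j ^+ k j * \prod_(0 <= j < Q) P j ^+ (e j * n).
  rewrite -prodrXl -big_split; apply: eq_big_nat => j /andP[_ lt_j] /=.
  by rewrite -exprM -exprD muln2 even_halfK ?(negbTE (k_even j lt_j)) // mulnC.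
by rewrite b2 -(big_mkord xpredT (fun i => P i ^+ (e i * n))); ring.
Qed.

Lemma factor_family_independent : ~ sq_dependent F (fun i : 'I_Q => fracS (P i)).
Proof.
move=> [T1 [T2 [neT [u [h [Uu [[a [n def_h]] _] def_T]]]]]].
have [i0 T12_i0] : exists i0, (i0 \in T1) != (i0 \in T2).
  apply/existsP; apply: contraNT neT => /existsPn eqT; apply/eqP/setP => i.
  by apply/eqP/negPn/eqT.
have prod_set (T : {set 'I_Q}) : \prod_(i in T) P i = \prod_(i < Q) P i ^+ (i \in T).
  by rewrite big_mkcond; apply: eq_bigr => i _; case: (i \in T); rewrite ?expr1 ?expr0.
pose c (i : 'I_Q) := ((i \in T1) + (i \in T2) + e i * (n + n))%N.
have : (\prod_(i in T1) P i * \prod_(i in T2) P i) * F ^+ (n + n) = u * a ^+ 2.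
  apply: (frac_Fpow_eq F0); rewrite fracSM !fracS_prod def_T def_h expr_div_n.
  by rewrite -exprM muln2 -addnn mulrA -(fracSX a) -fracSM.
rewrite !prod_set FpowE mulrCA -!big_split (eq_bigr (fun i : 'I_Q => P i ^+ c i)) /=; last first.
  by move=> i _; rewrite -!exprD.
rewrite (bigD1 i0) //= mulrCA => def_ua.
have := prime_pow_square_even hS (factor_data_irrS dF (ltn_ord i0))
  (factor_data_cofactor hS dF (unitSX (n + n) UuF)) Uu def_ua.
rewrite !oddD oddM addnn odd_double andbF addbF.
by case: (i0 \in T1) (i0 \in T2) T12_i0 => [] [].
Qed.

Lemma loc_units_dependent K (g : 'I_K -> {fraction S}) :
  (Q < K)%N -> (forall i, loc_unit F (g i)) -> sq_dependent F g.
Proof.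
move=> lt_QK Ug.
have [v rep_v] := fin_all_exists (fun i => loc_unit_monomial (Ug i)).
have [k rep_k] := fin_all_exists rep_v.
have [n rep_n] := fin_all_exists rep_k.
have Uv i : unitS (v i) by case: (rep_n i).
have def_g i : g i = monomial (v i) (k i) (n i) by case: (rep_n i).
pose kT (T : {set 'I_K}) j := (\sum_(i in T) k i j)%N.
pose nT (T : {set 'I_K}) := (\sum_(i in T) n i)%N.
have prod_g (T : {set 'I_K}) :
    \prod_(i in T) g i = monomial (\prod_(i in T) v i) (kT T) (nT T).
  by rewrite (eq_bigr _ (fun i _ => def_g i)) prod_monomial.
pose parity (T : {set 'I_K}) := [ffun j : 'I_Q => odd (kT T j + nT T * e j)].
have /injectivePn [T1 [T2 neT eq_par]] : ~~ injectiveb parity.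
  apply/injectiveP => /leq_card; rewrite card_ffun card_bool card_ord.
  by rewrite -cardsT -powersetT card_powerset cardsT card_ord leq_exp2l // leqNgt lt_QK.
pose V := \prod_(i in T1) v i * \prod_(i in T2) v i.
have [|h Uh def_sq] := @monomial_even_square V (fun j => kT T1 j + kT T2 j)%N (nT T1 + nT T2).
  move=> j lt_j; move/ffunP/(_ (Ordinal lt_j)): eq_par; rewrite !ffunE /=.
  by move=> par_j; rewrite mulnDl addnACA oddD par_j addbb.
exists T1, T2; split=> //; exists (V * uF ^+ (nT T1 + nT T2)), h; split=> //.
  by apply/unitSM/unitSX/UuF; apply: unitSM; apply: unitS_prod.
by rewrite !prod_g monomialM def_sq.
Qed.

End FactorRank.

Lemma loc_iso_factor_count (S : idomainType) (hS : is_UFD S) (F F' : S)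
    (F0 : F != 0) (F'0 : F' != 0) (D : {fraction S} -> {fraction S})
    (hD : loc_ring_iso F F' D) (hDU : preserves_units D) es es' :
  factorization F es -> factorization F' es' -> size es = size es'.
Proof.
move=> [u [ps [Uu [size_ps [irr_ps [cop_ps [es_gt0 [_ def_F]]]]]]]].
move=> [u' [ps' [Uu' [size_ps' [irr_ps' [cop_ps' [es_gt0' [_ def_F']]]]]]]].
have dF : factor_data F u ps es by [].
have dF' : factor_data F' u' ps' es' by [].
rewrite -size_ps -size_ps'; case: (ltngtP (size ps) (size ps')) => // lt_ps; exfalso.
  apply: (factor_family_independent hS F'0 dF').
  have [g gE] := fin_all_exists (fun i : 'I_(size ps') =>
    loc_iso_surj hD (in_loc_fracS F' (nth 0 ps' i))).
  have Lg i : in_loc F (g i) by case: (gE i).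
  apply: (sq_dependent_loc_iso hD hDU Lg (fun i => esym (gE i).2)).
  apply: (loc_units_dependent hS F0 dF es_gt0 lt_ps) => i.
  apply: (loc_iso_unit_rev hD (Lg i)); rewrite (gE i).2.
  exact: (loc_unit_factor F'0 dF' es_gt0').
apply: (factor_family_independent hS F0 dF).
pose g (i : 'I_(size ps)) := fracS (nth 0 ps i).
have Lg i : in_loc F (g i) by apply: in_loc_fracS.
apply: (sq_dependent_loc_iso_rev hD hDU Lg (fun i => erefl (D (g i)))).
apply: (loc_units_dependent hS F'0 dF' es_gt0' lt_ps) => i.
exact/(loc_iso_unit hD)/(loc_unit_factor F0 dF es_gt0).
Qed.

Theorem mainTheorem18 (S : idomainType) (hS : is_UFD S) (F F' : S)
  (hF0 : F != 0) (hFu : ~ unitS F) (hF'0 : F' != 0) (hF'u : ~ unitS F')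
  (D : {fraction S} -> {fraction S})
  (hD : loc_ring_iso F F' D) (hDU : preserves_units D) :
  (forall es es' : seq nat, factorization F es -> factorization F' es' ->
     size es = size es') /\
  (irreducibleS F -> irreducibleS F' ->
   exists Theta : S -> S,
     (forall C, unitS C -> unitS (Theta C)) /\
     (forall C1 C2, unitS C1 -> unitS C2 -> Theta C1 = Theta C2 -> C1 = C2) /\
     (forall C', unitS C' -> exists C, unitS C /\ Theta C = C') /\
     (forall C, unitS C -> forall es es' : seq nat,
        factorization (F - C) es -> factorization (F' - Theta C) es' ->
        size es = size es' /\
        (forall i, (1 <= i <= size es)%N -> nth 0%N es i.-1 = nth 0%N es' i.-1))).
Proof.
split=> [es es' | irr_F irr_F']; first exact: (loc_iso_factor_count hS hF0 hF'0 hD hDU).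
have [Theta [UTheta Theta_inj Theta_surj Theta_fact]] :=
  loc_iso_shift_factorization hS irr_F irr_F' hD hDU.
exists Theta; split; first exact: UTheta.
split; first exact: Theta_inj.
split; first exact: Theta_surj.
by move=> C UC es es' fac fac'; rewrite (Theta_fact C UC es es' fac fac').
Qed.
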